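(* In the finite element setting described in the context, let each element mass matrix $M_e$ be symmetric positive definite, fix an integer $0<r<m$, and assume $\lambda_{m-r}(K_e,M_e)>0$ for every element $e$. For each element define $$\overline{M}_e=M_e+V_e\,g(D_{e,2})\,V_e^T,\qquad V_e=M_eU_{e,2},\qquad g(\lambda)=\frac{\lambda}{\lambda_{m-r}(K_e,M_e)}-1,$$ where $D_{e,2}=\mathrm{diag}(\lambda_{m-r+1}(K_e,M_e),\dots,\lambda_m(K_e,M_e))$ and $U_{e,2}\in\mathbb{R}^{m\times r}$ has as columns the corresponding $M_e$-orthonormal eigenvectors of $(K_e,M_e)$ ($g$ applied entrywise to the diagonal). Let $M=\sum_eL_e^TM_eL_e$ and $\overline{M}=\sum_eL_e^T\overline{M}_eL_e$. Then for all $i=1,\dots,n$, $$1\le\frac{\omega_i}{\overline{\omega}_i}\le\max_e\frac{\omega_{m,e}}{\omega_{m-r,e}},$$ where $\omega_i=\sqrt{\lambda_i(K,M)}$, $\overline{\omega}_i=\sqrt{\lambda_i(K,\overline{M})}$ and $\omega_{j,e}=\sqrt{\lambda_j(K_e,M_e)}$.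
   Context: Finite element setting: there are $n$ global degrees of freedom and $N$ elements, each with $m$ local degrees of freedom. For each element $e$, $L_e\in\mathbb{R}^{m\times n}$ satisfies $L_e^T=[\mathbf{e}_{i_1},\dots,\mathbf{e}_{i_m}]$ for distinct indices $i_1,\dots,i_m$ (columns of $I_n$), and every global index appears for at least one element. Element matrices are assembled as $A=\sum_{e=1}^N L_e^TA_eL_e$. The global stiffness matrix is $K=\sum_e L_e^TK_eL_e$ with each $K_e$ symmetric positive semidefinite, and $K$ is assumed symmetric positive definite. Generalized eigenvalues of a pair ($A$ symmetric, $B$ symmetric positive definite) are numbered in ascending order; ''$M_e$-orthonormal'' means $U_{e,2}^TM_eU_{e,2}=I_r$. *)

From HB Require Import structures.
From mathcomp Require Import all_boot all_order all_algebra.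
From mathcomp Require Import boolp classical_sets reals.
Set Implicit Arguments. Unset Strict Implicit. Unset Printing Implicit Defensive.
Import Order.TTheory GRing.Theory Num.Theory.
Local Open Scope ring_scope.

Section Defs.
Variable R : realType.

Definition qform n (A : 'M[R]_n) (x : 'cV[R]_n) : R := (x^T *m A *m x) ord0 ord0.

Definition symmetric n (A : 'M[R]_n) : Prop := A^T = A.
Definition psd n (A : 'M[R]_n) : Prop := symmetric A /\ forall x, 0 <= qform A x.
Definition spd n (A : 'M[R]_n) : Prop :=
  symmetric A /\ forall x : 'cV[R]_n, x != 0 -> 0 < qform A x.

Definition pencil_poly n (A B : 'M[R]_n) : {poly R} :=
  \det (map_mx polyC A - 'X *: map_mx polyC B).

(* s is the ascending list (with multiplicity) of generalized eigenvalues of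
   (A,B): the roots of det(A - x B) = det(B) * prod_i (lambda_i - x). *)
Definition is_geneig_list n (A B : 'M[R]_n) (s : seq R) : Prop :=
  [/\ size s = n, sorted <=%R s &
      pencil_poly A B = \det B *: \prod_(x <- s) (x%:P - 'X)].

Definition geneigs n (A B : 'M[R]_n) : seq R :=
  xget [::] (fun s => is_geneig_list A B s).

(* lambda_i(A,B), numbered from 0 (lambda_0 is the smallest). *)
Definition geneig n (A B : 'M[R]_n) (i : nat) : R := nth 0 (geneigs A B) i.

(* Boolean (0/1) restriction matrix L_e with L_e^T = [e_{idx 0}, ..., e_{idx (m-1)}] *)
Definition restr_mx m n (idx : 'I_m -> 'I_n) : 'M[R]_(m, n) :=
  \matrix_(k, j) (idx k == j)%:R.

Definition assemble N m n (idx : 'I_N -> 'I_m -> 'I_n) (A : 'I_N -> 'M[R]_m)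
  : 'M[R]_n :=
  \sum_(e < N) (restr_mx (idx e))^T *m A e *m restr_mx (idx e).

End Defs.

From Pilot Require Import Defs.
From HB Require Import structures.
From mathcomp Require Import all_boot all_order all_algebra.
From mathcomp Require Import boolp classical_sets reals.
From mathcomp Require Import fingroup perm complex ring zify.
Set Implicit Arguments. Unset Strict Implicit. Unset Printing Implicit Defensive.
Import Order.TTheory GRing.Theory Num.Theory.
Local Open Scope ring_scope.

(* With c_e = lambda_m(K_e, M_e) / lambda_(m-r)(K_e, M_e), the diagonal weights
   g(lambda_(m-r+k)) lie in [0, c_e - 1], so Bessel's inequality for the
   M_e-orthonormal columns of U_(e,2) gives M_e <= Mbar_e <= c_e M_e as
   quadratic forms.
   Assembling, M <= Mbar <= (max_e c_e) M.  A Courant-Fischer dimension count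
   turns B2 <= c B1 into lambda_i(K, B1) <= c lambda_i(K, B2), and square roots
   give both bounds.  The generalized eigenvalues themselves are identified
   through a sorted simultaneous diagonalization of the pencil. *)

Lemma tr_mx11 (T : Type) (X : 'M[T]_1) : X^T = X.
Proof. by apply/matrixP=> i j; rewrite !ord1 mxE. Qed.

Section QuadraticForms.
Variable R : realType.

Lemma qform_mulmx m n (A : 'M[R]_m) (X : 'M[R]_(m, n)) c :
  qform A (X *m c) = qform (X^T *m A *m X) c.
Proof. by rewrite /qform trmx_mul !mulmxA. Qed.

Lemma qformD n (A B : 'M[R]_n) x : qform (A + B) x = qform A x + qform B x.
Proof. by rewrite /qform mulmxDr mulmxDl mxE. Qed.

Lemma qform_addv n (A : 'M[R]_n) x y : A^T = A ->
  qform A (x + y) = qform A x + qform A y + 2 * (x^T *m A *m y) 0 0.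
Proof.
move=> As; have yAx : y^T *m A *m x = x^T *m A *m y.
  by rewrite -[LHS]tr_mx11 !trmx_mul trmxK As mulmxA.
by rewrite /qform mulmxDr linearD /= !mulmxDl yAx !mxE; ring.
Qed.

Lemma qform_diag n (d : 'I_n -> R) c :
  qform (diag_mx (\row_i d i)) c = \sum_j d j * c j 0 ^+ 2.
Proof.
by rewrite /qform mul_mx_diag mxE; apply: eq_bigr => j _; rewrite !mxE; ring.
Qed.

Lemma qform1 n (c : 'cV[R]_n) : qform 1%:M c = \sum_j c j 0 ^+ 2.
Proof.
by rewrite /qform mulmx1 mxE; apply: eq_bigr => j _; rewrite !mxE; ring.
Qed.

Lemma spd_psd n (B : 'M[R]_n) : spd B -> psd B.
Proof.
case=> Bs Bp; split=> // x; have [->|/Bp/ltW//] := eqVneq x 0.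
by rewrite /qform mulmx0 mxE.
Qed.

Lemma spd_qform_ge0 n (B : 'M[R]_n) x : spd B -> 0 <= qform B x.
Proof. by move/spd_psd=> [_ ->]. Qed.

Lemma spd_mul_eq0 n (B : 'M[R]_n) (x : 'cV[R]_n) : spd B -> B *m x = 0 -> x = 0.
Proof.
move=> [_ Bp] Bx; apply/eqP; apply/negPn/negP=> /Bp.
by rewrite /qform -mulmxA Bx mulmx0 mxE ltxx.
Qed.

Lemma spd_unitmx n (B : 'M[R]_n) : spd B -> B \in unitmx.
Proof.
move=> Bspd; rewrite -row_free_unit -kermx_eq0; apply/eqP/row_matrixP=> i.
rewrite row0; set z := row i _.
have zB : z *m B = 0 by rewrite /z -row_mul mulmx_ker row0.
apply: trmx_inj; rewrite trmx0; apply: (spd_mul_eq0 Bspd).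
by rewrite -{1}(proj1 Bspd) -trmx_mul zB trmx0.
Qed.

Lemma spd_congr m n (B : 'M[R]_m) (Y : 'M[R]_(m, n)) :
  spd B -> (forall z : 'cV_n, Y *m z = 0 -> z = 0) -> spd (Y^T *m B *m Y).
Proof.
move=> [Bs Bp] Yinj; split; first by rewrite /Defs.symmetric !trmx_mul trmxK Bs mulmxA.
move=> z zN0; rewrite -qform_mulmx; apply: Bp.
by apply: contra zN0 => /eqP/Yinj->.
Qed.

Lemma spd_of_qform_ge n (A B : 'M[R]_n) :
  A^T = A -> spd B -> (forall x, qform B x <= qform A x) -> spd A.
Proof. by move=> As [_ Bp] BA; split=> // x /Bp/lt_le_trans; apply. Qed.

Lemma unitmx_of_congr1 n (B X : 'M[R]_n) : X^T *m B *m X = 1%:M -> X \in unitmx.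
Proof.
move=> XB; rewrite unitmxE unitfE; apply/eqP => dX.
by move/eqP: (congr1 determinant XB); rewrite !det_mulmx dX mulr0 det1 eq_sym oner_eq0.
Qed.

End QuadraticForms.

Section PencilDiagonalization.
Variable R : realType.
Local Notation C := R[i].
Local Notation f := (real_complex R).

Lemma map_complex_hermitian_form n (M : 'M[R]_n) (a b : 'rV[R]_n) : M^T = M ->
  (map_mx f a + 'i%C *: map_mx f b) *m map_mx f M *m
     (map_mx f a - 'i%C *: map_mx f b)^T
  = map_mx f (a *m M *m a^T + b *m M *m b^T).
Proof.
move=> Ms; have ii : 'i%C * 'i%C = -1 :> C by rewrite -expr2 sqr_i.
set A := map_mx f a; set B := map_mx f b; set Mc := map_mx f M.
have cross : B *m Mc *m A^T = A *m Mc *m B^T.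
  by rewrite -[LHS]tr_mx11 !trmx_mul trmxK !map_trmx Ms mulmxA.
rewrite map_mxD !map_mxM -!map_trmx -/A -/B -/Mc.
rewrite linearB /= linearZ /= mulmxDl -scalemxAl mulmxDl !mulmxBr.
by rewrite -!scalemxAl -!scalemxAr !scalerA ii cross scaleN1r opprK addrA subrK.
Qed.

(* Pairing [v K = lam v B] with the conjugate of [v] gives [lam] as a ratio
   of two real quadratic forms. *)
Lemma pencil_complex_eigenvalue_real n (K B : 'M[R]_n) (lam : C) (v : 'rV[C]_n) :
  K^T = K -> spd B -> v != 0 -> v *m map_mx f K = lam *: (v *m map_mx f B) ->
  exists t : R, lam = f t.
Proof.
move=> Ks [Bs Bp] vN0 vK.
set a := map_mx (@complex.Re R) v; set b := map_mx (@complex.Im R) v.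
have vE : v = map_mx f a + 'i%C *: map_mx f b.
  by apply/matrixP=> i j; rewrite !mxE; exact: complexE.
have := congr1 (fun X => (X *m (map_mx f a - 'i%C *: map_mx f b)^T) 0 0) vK.
rewrite /= -scalemxAl {1 2}vE !map_complex_hermitian_form // => vKv.
have eq_lam : f (qform K a^T + qform K b^T) = lam * f (qform B a^T + qform B b^T).
  by move: vKv; rewrite /qform !trmxK !mxE.
set qK := _ + _ in eq_lam; set qB := _ + _ in eq_lam.
have qB_gt0 : 0 < qB.
  have qB_ge0 x : 0 <= qform B x by apply: spd_qform_ge0.
  have [a0|aN0] := eqVneq a 0.
    have [b0|bN0] := eqVneq b 0.
      by move: vN0; rewrite vE a0 b0 !map_mx0 scaler0 addr0 eqxx.
    by rewrite /qB addrC ltr_wpDr // Bp // trmx_eq0.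
  by rewrite /qB ltr_wpDr // Bp // trmx_eq0.
exists (qK / qB); have fqB : f qB != 0 by rewrite (inj_eq (@complexI R)) gt_eqF.
by rewrite fmorph_div /= eq_lam mulfK.
Qed.

Lemma pencil_real_eigenpair n (K B : 'M[R]_n) : (0 < n)%N -> K^T = K -> spd B ->
  exists lam (u : 'cV[R]_n), u != 0 /\ K *m u = lam *: (B *m u).
Proof.
move=> n_gt0 Ks Bspd; set A := K *m invmx B.
have AB : A *m B = K by rewrite /A mulmxKV ?spd_unitmx.
have [lam /eigenvalueP [v vA vN0]] := eigenvalue_closed (map_mx f A) n_gt0.
have [t lamE] : exists t : R, lam = f t.
  apply: pencil_complex_eigenvalue_real Ks Bspd vN0 _.
  by rewrite -AB map_mxM mulmxA vA -scalemxAl.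
have : eigenvalue (map_mx f A) (f t) by apply/eigenvalueP; exists v; rewrite -?lamE.
rewrite eigenvalue_root_char -map_char_poly fmorph_root -eigenvalue_root_char.
case/eigenvalueP=> z zA zN0; exists t, z^T; split; first by rewrite trmx_eq0.
have zK : z *m K = t *: (z *m B) by rewrite -AB mulmxA zA -scalemxAl.
by rewrite -{1}Ks -(proj1 Bspd) -!trmx_mul zK linearZ.
Qed.

Lemma spd_normalize n (B : 'M[R]_n) (u : 'cV[R]_n) : spd B -> u != 0 ->
  let w := (Num.sqrt (qform B u))^-1 *: u in w^T *m B *m w = 1%:M.
Proof.
move=> [_ Bp] uN0 w; have s_gt0 : 0 < qform B u by apply: Bp.
rewrite /w !linearZ /= -!scalemxAl [u^T *m B *m u]mx11_scalar.
rewrite -/(qform B u) !scale_scalar_mx mulrA -expr2 exprVn sqr_sqrtr ?ltW //.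
by rewrite mulVf ?gt_eqF.
Qed.

Lemma pencil_unit_eigenpair n (K B : 'M[R]_n) : (0 < n)%N -> K^T = K -> spd B ->
  exists lam (w : 'cV[R]_n), w^T *m B *m w = 1%:M /\ K *m w = lam *: (B *m w).
Proof.
move=> n_gt0 Ks Bspd; have [lam [u [uN0 Ku]]] := pencil_real_eigenpair n_gt0 Ks Bspd.
exists lam, ((Num.sqrt (qform B u))^-1 *: u); split; first exact: spd_normalize.
by rewrite -!scalemxAr Ku scalerA mulrC -scalerA.
Qed.

Lemma exists_orthocomplement n (c : 'cV[R]_n.+1) : c != 0 ->
  exists p (Y : 'M[R]_(n.+1, p)),
    [/\ p = n, Y^T *m c = 0 & forall z : 'cV_p, Y *m z = 0 -> z = 0].
Proof.
move=> cN0; set Z := kermx c; exists (\rank Z), (row_base Z)^T; split.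
- have rc : \rank c = 1%N.
    by apply/eqP; rewrite eqn_leq rank_leq_col lt0n mxrank_eq0 cN0.
  by rewrite mxrank_ker rc subn1.
- by rewrite trmxK; apply/sub_kermxP; rewrite eq_row_base.
- move=> z Yz; apply: trmx_inj; apply/eqP.
  rewrite trmx0 -(mulmx_free_eq0 _ (row_base_free Z)).
  by rewrite -[row_base Z]trmxK -trmx_mul Yz trmx0.
Qed.

Lemma pencil_simultaneous_diag n (K B : 'M[R]_n) : K^T = K -> spd B ->
  exists p (X : 'M[R]_(n, p)) (d : 'rV[R]_p),
    [/\ p = n, X^T *m B *m X = 1%:M & X^T *m K *m X = diag_mx d].
Proof.
have [k] := ubnP n; elim: k n K B => // k IH [|n] K B ltnk Ks Bspd.
  by exists 0%N, 0, 0; split => //; apply/matrixP => [[]].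
have [lam [w [wBw Kw]]] := pencil_unit_eigenpair (ltn0Sn n) Ks Bspd.
have [Bs _] := Bspd.
have wK : w^T *m K = lam *: (w^T *m B) by rewrite -{1}Ks -Bs -!trmx_mul Kw linearZ.
have BwN0 : B *m w != 0.
  apply: contra_eqN wBw => /eqP Bw0; rewrite -mulmxA Bw0 mulmx0.
  by apply/eqP=> /matrixP/(_ 0 0)/eqP; rewrite !mxE eqxx eq_sym oner_eq0.
have [p [Y [pn YBw Yinj]]] := exists_orthocomplement BwN0.
rewrite mulmxA in YBw.
have wBY : w^T *m B *m Y = 0.
  by apply: trmx_inj; rewrite trmx0 !trmx_mul trmxK Bs mulmxA.
have wKY : w^T *m K *m Y = 0 by rewrite wK -scalemxAl wBY scaler0.
have YKw : Y^T *m K *m w = 0 by rewrite -mulmxA Kw -scalemxAr mulmxA YBw scaler0.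
have p_lt_k : (p < k)%N by rewrite pn -ltnS (leq_trans _ ltnk).
have KYs : (Y^T *m K *m Y)^T = Y^T *m K *m Y by rewrite !trmx_mul trmxK Ks mulmxA.
have [p' [X' [d' [p'E X'B X'K]]]] := IH _ _ _ p_lt_k KYs (spd_congr Bspd Yinj).
exists (1 + p')%N, (row_mx w (Y *m X')), (row_mx (lam%:M : 'rV_1) d'); split.
- by rewrite p'E pn.
- rewrite tr_row_mx mul_col_mx mul_col_row wBw (scalar_mx_block 1 p') -X'B.
  rewrite !trmx_mul !mulmxA wBY mul0mx [X'^T *m _ *m _ *m w](_ : _ = 0) //.
  by rewrite -!mulmxA (mulmxA Y^T) YBw mulmx0.
- have wKw : w^T *m K *m w = lam%:M by rewrite wK -scalemxAl wBw scalemx1.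
  rewrite tr_row_mx mul_col_mx mul_col_row diag_mx_row wKw.
  rewrite -X'K !trmx_mul !mulmxA wKY mul0mx [X'^T *m _ *m _ *m w](_ : _ = 0).
    by congr block_mx; apply/matrixP=> i j; rewrite !ord1 !mxE.
  by rewrite -!mulmxA (mulmxA Y^T) YKw mulmx0.
Qed.

Lemma exists_sorting_perm n (d : 'I_n -> R) :
  exists s : 'S_n, forall i j : 'I_n, (i <= j)%N -> d (s i) <= d (s j).
Proof.
pose t := [tuple d i | i < n].
have : perm_eq (sort <=%R (t : seq R)) t by rewrite perm_sort.
case/tuple_permP => s st; exists s => i j ij.
have t_sorted : sorted <=%R (sort <=%R (t : seq R)) by apply/sort_sorted/le_total.
have := le_sorted_leq_nth 0 t_sorted; rewrite st size_tuple => /(_ i j).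
by rewrite !inE !ltn_ord -!tnth_nth !tnth_mktuple => /(_ isT isT ij).
Qed.

Lemma pencil_sorted_diag n (K B : 'M[R]_n) : K^T = K -> spd B ->
  exists (X : 'M[R]_n) (d : 'I_n -> R),
    [/\ X^T *m B *m X = 1%:M, X^T *m K *m X = diag_mx (\row_i d i) &
        forall i j : 'I_n, (i <= j)%N -> d i <= d j].
Proof.
move=> Ks Bspd; have [p [X [d0 [pn XB XK]]]] := pencil_simultaneous_diag Ks Bspd.
subst p; have [s s_sorts] := exists_sorting_perm (fun i => d0 0 i).
have congr_perm (A : 'M[R]_n) :
    (X *m perm_mx s^-1)^T *m A *m (X *m perm_mx s^-1) =
    perm_mx s *m (X^T *m A *m X) *m perm_mx s^-1.
  by rewrite trmx_mul tr_perm_mx invgK !mulmxA.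
exists (X *m perm_mx s^-1), (fun i => d0 0 (s i)); split => //.
- by rewrite congr_perm XB mulmx1 -perm_mxM mulgV perm_mx1.
- rewrite congr_perm XK -row_permE -col_permE; apply/matrixP => i j.
  by rewrite !mxE (inj_eq perm_inj).
Qed.

Lemma prod_CsubX (s : seq R) :
  \prod_(x <- s) (x%:P - 'X) = (-1) ^+ size s * \prod_(x <- s) ('X - x%:P).
Proof.
elim: s => [|x s IH]; first by rewrite !big_nil expr0 mul1r.
by rewrite !big_cons IH /= exprS; ring.
Qed.

Lemma geneig_list_unique n (K B : 'M[R]_n) s t : B \in unitmx ->
  is_geneig_list K B s -> is_geneig_list K B t -> s = t.
Proof.
move=> Bu [ss s_sorted ps] [st t_sorted pt].
apply: (sorted_eq le_trans le_anti) => //; apply: prod_XsubC_eq.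
have dB : \det B != 0 by rewrite -unitfE -unitmxE.
move: ps; rewrite pt => /(scalerI dB); rewrite !prod_CsubX ss st.
by move/(can_inj (signrMK n)).
Qed.

Lemma pencil_poly_diag n (K B X : 'M[R]_n) (d : 'I_n -> R) :
  X^T *m B *m X = 1%:M -> X^T *m K *m X = diag_mx (\row_i d i) ->
  pencil_poly K B = \det B *: \prod_i ((d i)%:P - 'X).
Proof.
move=> XB XK; set P := map_mx polyC X.
have PpencilP : P^T *m (map_mx polyC K - 'X *: map_mx polyC B) *m P =
                diag_mx (\row_i ((d i)%:P - 'X)).
  rewrite /P mulmxBr mulmxBl -scalemxAr -scalemxAl map_trmx -!map_mxM XB XK.
  by apply/matrixP => i j; rewrite !mxE; case: eqP => _; rewrite ?mulr1 ?mulr0 ?subr0.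
have detXBX : \det X * \det B * \det X = 1.
  by rewrite -{1}det_tr -!det_mulmx XB det1.
have := congr1 determinant PpencilP; rewrite !det_mulmx det_tr det_diag.
under [\prod_i _]eq_bigr do rewrite mxE.
rewrite /P det_map_mx /= => <-.
rewrite /pencil_poly -mul_polyC mulrA mulrC !mulrA -!rmorphM /= mulrC.
by rewrite detXBX mulr1.
Qed.

(* [geneigs] is defined by a choice; the diagonal of any sorted simultaneous
   diagonalization satisfies the specification, which pins the choice down. *)
Lemma geneig_diag n (K B X : 'M[R]_n) (d : 'I_n -> R) : spd B ->
  X^T *m B *m X = 1%:M -> X^T *m K *m X = diag_mx (\row_i d i) ->
  (forall i j : 'I_n, (i <= j)%N -> d i <= d j) ->
  forall i : 'I_n, geneig K B i = d i.
Proof.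
move=> Bspd XB XK d_sorted i; set s := [seq d i | i <- enum 'I_n].
have s_spec : is_geneig_list K B s.
  split; first by rewrite size_map size_enum_ord.
    rewrite /s; apply: (homo_sorted (e := fun i j : 'I_n => (i <= j)%N)).
      by move=> x y; apply: d_sorted.
    by have := iota_sorted 0 n; rewrite -val_enum_ord sorted_map.
  by rewrite (pencil_poly_diag XB XK) big_map big_enum.
have := geneig_list_unique (spd_unitmx Bspd) s_spec (xgetI [::] s_spec).
rewrite /geneig /geneigs => <-.
by rewrite (nth_map i) ?size_enum_ord // nth_ord_enum.
Qed.

Lemma geneig_spec n (K B : 'M[R]_n) : K^T = K -> spd B ->
  exists (X : 'M[R]_n) (d : 'I_n -> R),
    [/\ X^T *m B *m X = 1%:M, X^T *m K *m X = diag_mx (\row_i d i),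
        forall i j : 'I_n, (i <= j)%N -> d i <= d j &
        forall i : 'I_n, geneig K B i = d i].
Proof.
move=> Ks Bspd; have [X [d [XB XK d_sorted]]] := pencil_sorted_diag Ks Bspd.
by exists X, d; split => //; apply: geneig_diag XB XK d_sorted.
Qed.

Lemma geneig_le n (K B : 'M[R]_n) i j : K^T = K -> spd B ->
  (i <= j)%N -> (j < n)%N -> geneig K B i <= geneig K B j.
Proof.
move=> Ks Bspd ij jn; have [X [d [_ _ d_sorted d_geneig]]] := geneig_spec Ks Bspd.
have iN : (i < n)%N by apply: leq_ltn_trans jn.
by rewrite (d_geneig (Ordinal iN)) (d_geneig (Ordinal jn)); apply: d_sorted.
Qed.

Lemma geneig_gt0 n (K B : 'M[R]_n) (i : 'I_n) : spd K -> spd B -> 0 < geneig K B i.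
Proof.
move=> [Ks Kp] Bspd; have [X [d [XB XK _ ->]]] := geneig_spec Ks Bspd.
pose e : 'cV[R]_n := delta_mx i 0.
have -> : d i = qform K (X *m e).
  rewrite qform_mulmx XK qform_diag (bigD1 i) //= big1 ?addr0 => [|j ji].
    by rewrite mxE !eqxx expr1n mulr1.
  by rewrite mxE (negbTE ji) expr0n /= mulr0.
apply: Kp; apply: contraTneq isT => /(congr1 (mulmx (invmx X))).
rewrite mulKmx ?(unitmx_of_congr1 XB) // mulmx0 => /matrixP/(_ i 0).
by rewrite !mxE !eqxx => /eqP; rewrite oner_eq0.
Qed.

End PencilDiagonalization.

Section MinMax.
Variable R : realType.

Lemma pid_mx_diag n r : (pid_mx r : 'M[R]_n) = diag_mx (\row_j ((j < r)%N)%:R).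
Proof.
apply/matrixP => i j; rewrite !mxE; have [->|ij] := eqVneq i j; first by rewrite eqxx.
by rewrite val_eqE (negbTE ij) andFb mulr0n.
Qed.

Lemma copid_mx_diag n r : (copid_mx r : 'M[R]_n) = diag_mx (\row_j ((r <= j)%N)%:R).
Proof.
apply/matrixP => i j; rewrite /copid_mx pid_mx_diag !mxE.
have [->|ij] := eqVneq i j; last by rewrite !mulr0n subr0.
by case: (ltnP j r) => _; rewrite ?mulr1n ?subrr ?subr0.
Qed.

(* The witness is the span of the [B]-orthonormal eigenvectors of the
   [i + 1] smallest eigenvalues. *)
Lemma geneig_lower_space n (K B : 'M[R]_n) (i : 'I_n) : K^T = K -> spd B ->
  exists2 S : 'M[R]_n, \rank S = i.+1 &
    forall v : 'rV_n, (v <= S)%MS -> qform K v^T <= geneig K B i * qform B v^T.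
Proof.
move=> Ks Bspd; have [X [d [XB XK d_sorted ->]]] := geneig_spec Ks Bspd.
exists (pid_mx i.+1 *m X^T).
  by rewrite mxrankMfree ?row_free_unit ?unitmx_tr ?(unitmx_of_congr1 XB) ?rank_pid_mx.
move=> _ /submxP [a ->]; rewrite mulmxA trmx_mul trmxK !qform_mulmx XK XB.
rewrite qform_diag qform1 mulr_sumr ler_sum // => j _.
rewrite pid_mx_diag mul_mx_diag !mxE.
case: (leqP j i) => ji; last by rewrite ltnS leqNgt ji mulr0 expr0n /= !mulr0.
by rewrite ler_wpM2r ?sqr_ge0 ?d_sorted.
Qed.

Lemma geneig_upper_space n (K B : 'M[R]_n) (i : 'I_n) : K^T = K -> spd B ->
  exists2 T : 'M[R]_n, \rank T = (n - i)%N &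
    forall v : 'rV_n, (v <= T)%MS -> geneig K B i * qform B v^T <= qform K v^T.
Proof.
move=> Ks Bspd; have [X [d [XB XK d_sorted ->]]] := geneig_spec Ks Bspd.
exists (copid_mx i *m X^T).
  rewrite mxrankMfree ?row_free_unit ?unitmx_tr ?(unitmx_of_congr1 XB) //.
  by rewrite rank_copid_mx // ltnW.
move=> _ /submxP [a ->]; rewrite mulmxA trmx_mul trmxK !qform_mulmx XK XB.
rewrite qform_diag qform1 mulr_sumr ler_sum // => j _.
rewrite copid_mx_diag mul_mx_diag !mxE.
case: (leqP i j) => ij; last by rewrite mulr0 expr0n /= !mulr0.
by rewrite ler_wpM2r ?sqr_ge0 ?d_sorted.
Qed.

Lemma capmx_exists_neq0 n (S T : 'M[R]_n) : (n < \rank S + \rank T)%N ->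
  exists2 v : 'rV_n, v != 0 & (v <= S)%MS && (v <= T)%MS.
Proof.
move=> rST; have : (S :&: T)%MS != 0.
  rewrite -mxrank_eq0 -lt0n; have := mxrank_sum_cap S T.
  by have := rank_leq_col (S + T)%MS; lia.
by case/rowV0Pn=> v; rewrite sub_capmx => vST vN0; exists v.
Qed.

(* A nonzero vector in the intersection of the lower space for [B2] and the
   upper space for [B1] exists by dimension count; comparing its Rayleigh
   quotients gives the inequality. *)
Lemma geneig_le_scale n (K B1 B2 : 'M[R]_n) (c : R) : psd K -> spd B1 -> spd B2 ->
  (forall x, qform B2 x <= c * qform B1 x) ->
  forall i : 'I_n, geneig K B1 i <= c * geneig K B2 i.
Proof.
move=> [Ks K_ge0] B1spd B2spd B2_le_B1 i.
have [S rS S_le] := geneig_lower_space i Ks B2spd.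
have [T rT T_ge] := geneig_upper_space i Ks B1spd.
have [|v vN0 /andP [vS vT]] := capmx_exists_neq0 (S := S) (T := T).
  by rewrite rS rT; have := ltn_ord i; lia.
have vTN0 : v^T != 0 by rewrite trmx_eq0.
have q1_gt0 : 0 < qform B1 v^T by apply: (proj2 B1spd).
have q2_gt0 : 0 < qform B2 v^T by apply: (proj2 B2spd).
have lam2_ge0 : 0 <= geneig K B2 i.
  by rewrite -(pmulr_lge0 _ q2_gt0) (le_trans (K_ge0 _) (S_le v vS)).
rewrite -(ler_pM2r q1_gt0) (le_trans (T_ge v vT)) // (le_trans (S_le v vS)) //.
by rewrite (mulrC c) -mulrA ler_wpM2l.
Qed.

End MinMax.

Section Assembly.
Variables (R : realType) (N m n : nat) (idx : 'I_N -> 'I_m -> 'I_n).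

Lemma restr_mx_mulE (e : 'I_N) (x : 'cV[R]_n) (k : 'I_m) :
  (restr_mx R (idx e) *m x) k 0 = x (idx e k) 0.
Proof.
rewrite mxE (bigD1 (idx e k)) //= !mxE eqxx mul1r big1 ?addr0 // => j jk.
by rewrite mxE eq_sym (negbTE jk) mul0r.
Qed.

Lemma qform_assemble (A : 'I_N -> 'M[R]_m) x :
  qform (assemble idx A) x = \sum_e qform (A e) (restr_mx R (idx e) *m x).
Proof.
rewrite /qform /assemble mulmx_sumr mulmx_suml summxE; apply: eq_bigr => e _.
by rewrite trmx_mul !mulmxA.
Qed.

Lemma assemble_sym (A : 'I_N -> 'M[R]_m) :
  (forall e, (A e)^T = A e) -> (assemble idx A)^T = assemble idx A.
Proof.
move=> As; rewrite /assemble linear_sum; apply: eq_bigr => e _ /=.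
by rewrite !trmx_mul trmxK As mulmxA.
Qed.

Lemma assemble_spd (A : 'I_N -> 'M[R]_m) :
  (forall e, spd (A e)) -> (forall j, exists e k, idx e k = j) ->
  spd (assemble idx A).
Proof.
move=> Aspd cover; split; first by apply: assemble_sym => e; case: (Aspd e).
move=> x xN0; rewrite qform_assemble.
have [j [l xj]] := matrix0Pn _ xN0; rewrite ord1 in xj.
have [e [k ek]] := cover j.
rewrite (bigD1 e) //= ltr_wpDr ?sumr_ge0 // => [f _|]; first exact: spd_qform_ge0.
apply: (proj2 (Aspd e)); apply/negP => /eqP xe0.
by move: xj; rewrite -ek -restr_mx_mulE xe0 mxE eqxx.
Qed.

Lemma assemble_qform_le (A B : 'I_N -> 'M[R]_m) (c : R) :
  (forall e x, qform (A e) x <= c * qform (B e) x) ->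
  forall x, qform (assemble idx A) x <= c * qform (assemble idx B) x.
Proof.
by move=> AB x; rewrite !qform_assemble mulr_sumr; apply: ler_sum => e _; apply: AB.
Qed.

End Assembly.

Section RankUpdate.
Variable R : realType.

Lemma bessel_ineq m r (M : 'M[R]_m) (U : 'M[R]_(m, r)) (x : 'cV[R]_m) :
  psd M -> U^T *m M *m U = 1%:M -> qform 1%:M ((M *m U)^T *m x) <= qform M x.
Proof.
move=> [Ms M_ge0] UMU; set z := (M *m U)^T *m x.
have zE : z = U^T *m M *m x by rewrite /z trmx_mul Ms.
have orth : (U *m z)^T *m M *m (x - U *m z) = 0.
  rewrite trmx_mul -!mulmxA (mulmxA U^T) mulmxBr -zE mulmxA UMU mul1mx subrr.
  by rewrite mulmx0.
rewrite -[x in qform M x](subrK (U *m z)) addrC qform_addv // orth mxE mulr0 addr0.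
by rewrite qform_mulmx UMU lerDl.
Qed.

Lemma qform_rank_update_bounds m r (M : 'M[R]_m) (U : 'M[R]_(m, r))
    (g : 'rV[R]_r) (c : R) :
  psd M -> U^T *m M *m U = 1%:M -> 1 <= c ->
  (forall k, 0 <= g 0 k) -> (forall k, g 0 k <= c - 1) ->
  forall x, qform M x <= qform (M + M *m U *m diag_mx g *m (M *m U)^T) x /\
            qform (M + M *m U *m diag_mx g *m (M *m U)^T) x <= c * qform M x.
Proof.
move=> Mpsd UMU c_ge1 g_ge0 g_le x; rewrite qformD.
set z := (M *m U)^T *m x.
have -> : qform (M *m U *m diag_mx g *m (M *m U)^T) x = \sum_k g 0 k * z k 0 ^+ 2.
  have -> : diag_mx g = diag_mx (\row_k g 0 k).
    by congr diag_mx; apply/rowP => k; rewrite mxE.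
  by rewrite -qform_diag /qform /z !trmx_mul !trmxK !mulmxA.
split; first by rewrite lerDl sumr_ge0 // => k _; rewrite mulr_ge0 ?sqr_ge0.
have : \sum_k g 0 k * z k 0 ^+ 2 <= (c - 1) * qform M x.
  apply: le_trans (ler_wpM2l _ (bessel_ineq x Mpsd UMU)); last by rewrite subr_ge0.
  by rewrite qform1 mulr_sumr ler_sum // => k _; rewrite ler_wpM2r ?sqr_ge0.
by move/(lerD (lexx (qform M x)))/le_trans; apply; rewrite mulrBl mul1r addrC subrK.
Qed.

Section ModifiedElementMass.
Variables (m r : nat) (K M : 'M[R]_m) (U : 'M[R]_(m, r)).
Hypotheses (Ks : K^T = K) (Mspd : spd M) (r_lt_m : (r < m)%N)
  (lo_gt0 : 0 < geneig K M (m - r).-1) (UMU : U^T *m M *m U = 1%:M).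

Local Notation lo := (geneig K M (m - r).-1).
Local Notation hi := (geneig K M m.-1).
Local Notation Mbar := (M + M *m U
  *m diag_mx (\row_(k < r) (geneig K M (m - r + k) / lo - 1)) *m (M *m U)^T).

Lemma modified_mass_qform_bounds x :
  qform M x <= qform Mbar x /\
  qform Mbar x <= (Num.sqrt hi / Num.sqrt lo) ^+ 2 * qform M x.
Proof.
have lo_le k : (k < r)%N -> lo <= geneig K M (m - r + k).
  by move=> kr; apply: geneig_le => //; lia.
have le_hi k : (k < r)%N -> geneig K M (m - r + k) <= hi.
  by move=> kr; apply: geneig_le => //; lia.
have lo_le_hi : lo <= hi by apply: geneig_le => //; lia.
have -> : (Num.sqrt hi / Num.sqrt lo) ^+ 2 = hi / lo.
  by rewrite expr_div_n !sqr_sqrtr // ltW // (lt_le_trans lo_gt0).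
apply: qform_rank_update_bounds (spd_psd Mspd) UMU _ _ _ x.
- by rewrite ler_pdivlMr ?mul1r.
- by move=> k; rewrite mxE subr_ge0 ler_pdivlMr ?mul1r ?lo_le.
- by move=> k; rewrite mxE lerB // ler_pM2r ?invr_gt0 ?le_hi.
Qed.

Lemma modified_mass_spd : spd Mbar.
Proof.
apply: spd_of_qform_ge Mspd (fun x => proj1 (modified_mass_qform_bounds x)).
rewrite linearD /= !trmx_mul tr_diag_mx !trmxK.
by have [-> _] := Mspd; rewrite !mulmxA.
Qed.

End ModifiedElementMass.

End RankUpdate.

Lemma sqrt_ratio_bounds (R : rcfType) (a b s : R) :
  0 < b -> 0 <= s -> b <= a -> a <= s ^+ 2 * b ->
  1 <= Num.sqrt a / Num.sqrt b /\ Num.sqrt a / Num.sqrt b <= s.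
Proof.
move=> b_gt0 s_ge0 ba a_le; have sb_gt0 : 0 < Num.sqrt b by rewrite sqrtr_gt0.
split; first by rewrite ler_pdivlMr // mul1r ler_sqrt // ltW // (lt_le_trans b_gt0 ba).
rewrite ler_pdivrMr // -[s]ger0_norm // -sqrtr_sqr -sqrtrM ?sqr_ge0 //.
by rewrite ler_sqrt // mulr_ge0 ?sqr_ge0 // ltW.
Qed.

Theorem mainTheorem4 (R : realType) (n N m r : nat)
  (idx : 'I_N -> 'I_m -> 'I_n)
  (Ke Me : 'I_N -> 'M[R]_m)
  (U2 : 'I_N -> 'M[R]_(m, r)) :
  (forall e, injective (idx e)) ->
  (forall j : 'I_n, exists e k, idx e k = j) ->
  (forall e, psd (Ke e)) ->
  spd (assemble idx Ke) ->
  (forall e, spd (Me e)) ->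
  (0 < r < m)%N ->
  (forall e, 0 < geneig (Ke e) (Me e) (m - r).-1) ->
  (* columns of U2 e: M_e-orthonormal eigenvectors for lambda_{m-r+1..m} *)
  (forall e, (U2 e)^T *m Me e *m U2 e = 1%:M) ->
  (forall e, Ke e *m U2 e =
     Me e *m U2 e *m diag_mx (\row_(k < r) geneig (Ke e) (Me e) (m - r + k))) ->
  let g e (l : R) := l / geneig (Ke e) (Me e) (m - r).-1 - 1 in
  let Mbar e := Me e + (Me e *m U2 e)
        *m diag_mx (\row_(k < r) g e (geneig (Ke e) (Me e) (m - r + k)))
        *m (Me e *m U2 e)^T in
  let K := assemble idx Ke in
  let M := assemble idx Me in
  let Mb := assemble idx Mbar in
  forall i : 'I_n,
    1 <= Num.sqrt (geneig K M i) / Num.sqrt (geneig K Mb i) /\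
    Num.sqrt (geneig K M i) / Num.sqrt (geneig K Mb i) <=
      \big[Num.max/0]_(e < N)
        (Num.sqrt (geneig (Ke e) (Me e) m.-1) /
         Num.sqrt (geneig (Ke e) (Me e) (m - r).-1)).
Proof.
move=> _ cover Kpsd Kspd Mspd /andP [_ r_lt_m] lo_gt0 UMU _ g Mbar K M Mb i.
set S := \big[Num.max/0]_(e < N) _.
have Ks e : (Ke e)^T = Ke e by case: (Kpsd e).
have Mbar_bounds e x : qform (Me e) x <= 1 * qform (Mbar e) x /\
                       qform (Mbar e) x <= S ^+ 2 * qform (Me e) x.
  have [lo hi] := modified_mass_qform_bounds (Ks e) (Mspd e) r_lt_m (lo_gt0 e) (UMU e) x.
  rewrite mul1r; split=> //; apply: (le_trans hi); rewrite ler_wpM2r ?spd_qform_ge0 //.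
  rewrite !expr2 ler_pM ?divr_ge0 ?sqrtr_ge0 //; exact: le_bigmax.
have Mbspd : spd Mb.
  by apply: assemble_spd cover => e; apply: modified_mass_spd.
have Mspd' : spd M := assemble_spd Mspd cover.
have S_ge0 : 0 <= S by apply: bigmax_ge_id.
apply: sqrt_ratio_bounds S_ge0 _ _; first exact: geneig_gt0.
- rewrite -[geneig K M i]mul1r; apply: (geneig_le_scale (spd_psd Kspd)) => //.
  by apply: assemble_qform_le => e x; case: (Mbar_bounds e x).
- apply: (geneig_le_scale (spd_psd Kspd)) => //.
  by apply: assemble_qform_le => e x; case: (Mbar_bounds e x).
Qed.
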